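(* Let $\mathbb X$ be a Cornish space of type $F$ and $\mathbf A=E(\mathbb X)$. Then the lattice of congruences of $\mathbf A$ is dually isomorphic to the lattice $\mathrm{Sub}\,\mathbb X$ of topologically closed substructures of $\mathbb X$ (including the empty one). In particular, $\mathbf A$ is simple if and only if $\mathbb X$ has no non-empty proper closed substructures.
   Context: $F=F^+\,\dot\cup\,F^-$ is a set of unary operation symbols. A Cornish space of type $F$ is a Priestley space $\langle X;\le,\mathscr T\rangle$ with unary operations $f^{\mathbb X}$ ($f\in F$) that are continuous order-preserving for $f\in F^+$ and continuous order-reversing for $f\in F^-$. A closed substructure is a topologically closed subset closed under every $f^{\mathbb X}$. $E(\mathbb X)$ is the Cornish algebra on the set of continuous order-preserving maps $\alpha\colon\langle X;\le,\mathscr T\rangle\to\mathbbm 2$ (the discrete two-element chain), with pointwise lattice operations and bounds, and $f^{E(\mathbb X)}(\alpha)=\alpha\circ f^{\mathbb X}$ for $f\in F^+$, $f^{E(\mathbb X)}(\alpha)=c\circ\alpha\circ f^{\mathbb X}$ for $f\in F^-$, where $c$ is Boolean complement on $\{0,1\}$. *)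

From HB Require Import structures.
From mathcomp Require Import all_boot all_order.
From mathcomp Require Import all_classical all_reals topology.
Set Implicit Arguments. Unset Strict Implicit. Unset Printing Implicit Defensive.
Local Open Scope classical_set_scope.

Definition partial_order (T : Type) (le : T -> T -> Prop) :=
  [/\ (forall x, le x x),
      (forall x y, le x y -> le y x -> x = y) &
      (forall x y z, le x y -> le y z -> le x z)].

Definition upset (T : Type) (le : T -> T -> Prop) (U : set T) :=
  forall x y, U x -> le x y -> U y.

Definition priestley_space (T : topologicalType) (le : T -> T -> Prop) :=
  [/\ partial_order le, compact [set: T] &
      (forall x y, ~ le x y ->
         exists U : set T, [/\ clopen U, upset le U, U x & ~ U y])].

Definition order_preserving (T : Type) (le : T -> T -> Prop) (g : T -> T) :=
  forall x y, le x y -> le (g x) (g y).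
Definition order_reversing (T : Type) (le : T -> T -> Prop) (g : T -> T) :=
  forall x y, le x y -> le (g y) (g x).

(* Type F = F^+ \dot\cup F^- : an index type F with sign : F -> bool,
   where sign f = true means f \in F^+ and sign f = false means f \in F^-.
   op f is the interpretation f^X. *)
Definition cornish_space (F : Type) (sign : F -> bool)
    (T : topologicalType) (le : T -> T -> Prop) (op : F -> T -> T) :=
  priestley_space le /\
  forall f, continuous (op f) /\
    (if sign f then order_preserving le (op f) else order_reversing le (op f)).

Definition closed_substructure (F : Type) (T : topologicalType)
    (op : F -> T -> T) (Y : set T) :=
  closed Y /\ forall f y, Y y -> Y (op f y).

(* Carrier of E(X): continuous order-preserving maps X -> 2
   (bool with its discrete topology, false < true). *)
Definition in_E (T : topologicalType) (le : T -> T -> Prop) (a : T -> bool) :=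
  continuous a /\ forall x y, le x y -> (a x ==> a y).

Definition E_meet (T : Type) (a b : T -> bool) : T -> bool := fun x => a x && b x.
Definition E_join (T : Type) (a b : T -> bool) : T -> bool := fun x => a x || b x.
Definition E_op (F : Type) (sign : F -> bool) (T : Type) (op : F -> T -> T)
    (f : F) (a : T -> bool) : T -> bool :=
  if sign f then (fun x => a (op f x)) else (fun x => ~~ a (op f x)).

(* Congruences of E(X), as binary relations on T -> bool supported on
   the carrier of E(X). (The bounds are nullary and impose no condition.) *)
Definition is_congruence (F : Type) (sign : F -> bool) (T : topologicalType)
    (le : T -> T -> Prop) (op : F -> T -> T)
    (th : (T -> bool) -> (T -> bool) -> Prop) :=
  [/\ (forall a b, th a b -> in_E le a /\ in_E le b),
      (forall a, in_E le a -> th a a),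
      (forall a b, th a b -> th b a),
      (forall a b c, th a b -> th b c -> th a c) &
      [/\ (forall a b c d, th a b -> th c d -> th (E_meet a c) (E_meet b d)),
          (forall a b c d, th a b -> th c d -> th (E_join a c) (E_join b d)) &
          (forall f a b, th a b -> th (E_op sign op f a) (E_op sign op f b))]].

Definition Con_E (F : Type) (sign : F -> bool) (T : topologicalType)
    (le : T -> T -> Prop) (op : F -> T -> T) :=
  {th : (T -> bool) -> (T -> bool) -> Prop | is_congruence sign le op th}.

Definition Sub_X (F : Type) (T : topologicalType) (op : F -> T -> T) :=
  {Y : set T | closed_substructure op Y}.

Definition rel_sub (A : Type) (r s : A -> A -> Prop) := forall a b, r a b -> s a b.

Definition E_simple (F : Type) (sign : F -> bool) (T : topologicalType)
    (le : T -> T -> Prop) (op : F -> T -> T) :=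
  (exists a b, [/\ in_E le a, in_E le b & a <> b]) /\
  forall th, is_congruence sign le op th ->
    th = (fun a b => in_E le a /\ a = b) \/
    th = (fun a b => in_E le a /\ in_E le b).

(* A congruence th of E(X) is determined by the closed substructure of points
   at which all th-related maps agree, and a closed substructure Y by the
   congruence "agree on Y".  That Y is recovered from its congruence is Priestley
   separation made uniform over the compact set Y.  That th is recovered is the
   harder half: the compact set where a /\ b < a \/ b is covered by the sets where
   c < d for pairs c <= d related by th, and finitely many such pairs collapse
   the interval [a /\ b, a \/ b] one after the other. *)

From HB Require Import structures.
From mathcomp Require Import all_boot all_order.
From mathcomp Require Import all_classical all_reals topology.

Set Implicit Arguments.
Unset Strict Implicit.
Unset Printing Implicit Defensive.
Local Open Scope classical_set_scope.

Lemma compact_setU_closed_cover (T : topologicalType) (K : set T)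
    (P : set (set T)) :
  compact K -> P set0 -> (forall U V, P U -> P V -> P (U `|` V)) ->
  (forall U, P U -> open U) -> (forall x, K x -> exists2 U, P U & U x) ->
  exists2 U, P U & K `<=` U.
Proof.
(* Otherwise the sets K `\` U with P U generate a proper filter, and a cluster
   point of it in K lies in no member of P. *)
move=> cK P0 PU Popen Pcover; apply: contrapT => noU.
pose G := filter_from P (fun U => K `\` U).
have GF : ProperFilter G.
  apply: filter_from_proper => [|U PU0].
    apply: filter_from_filter; first by exists set0.
    move=> U V PU0 PV0; exists (U `|` V); first exact: PU.
    by move=> x [Kx /not_orP[]].
  apply/set0P/eqP => KU; apply: noU; exists U => // x Kx.
  by apply: contrapT => nUx; have : (K `\` U) x by []; rewrite KU.
have GK : G K by exists set0 => // x [].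
have [x [Kx clx]] := cK G GF GK.
have [U PU0 Ux] := Pcover x Kx.
have GKU : G (K `\` U) by exists U.
have [y [[_ nUy] Uy]] := clx _ _ GKU (open_nbhs_nbhs (conj (Popen U PU0) Ux)).
exact: nUy Uy.
Qed.

Section BoolValued.
Variable T : topologicalType.

Lemma bool_preimage_open (a : T -> bool) (A : set bool) :
  continuous a -> open (a @^-1` A).
Proof. by move=> /continuousP; apply; exact: discrete_open. Qed.

Lemma continuous_bool_comb (g : bool -> bool -> bool) (c d : T -> bool) :
  continuous c -> continuous d -> continuous (fun x => g (c x) (d x)).
Proof.
move=> cc cd; apply/continuousP => A _.
have -> : (fun x => g (c x) (d x)) @^-1` A =
    (c @^-1` [set true] `&` d @^-1` [set v | A (g true v)]) `|`
    (c @^-1` [set false] `&` d @^-1` [set v | A (g false v)]).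
  by apply/seteqP; split=> x /=; [case: (c x); [left|right] | case=> -[/= ->]].
by apply: openU; apply: openI; exact: bool_preimage_open.
Qed.

Lemma continuous_asbool (U : set T) : clopen U -> continuous (fun x => `[< U x >]).
Proof.
move=> [oU cU]; apply/continuousP => A _.
have -> : (fun x => `[< U x >]) @^-1` A =
    (U `&` [set _ | A true]) `|` (~` U `&` [set _ | A false]).
  apply/seteqP; split=> x /=; first by case: (asboolP (U x)); [left|right].
  by case=> -[Ux]; [rewrite asboolT | rewrite asboolF].
have open_cst (Q : Prop) : open [set _ : T | Q].
  by have [/propT ->|/propF ->] := pselect Q; [exact: openT | exact: open0].
by apply: openU; apply: openI; rewrite ?openC.
Qed.

End BoolValued.
Arguments continuous_bool_comb {T} g {c d}.

Lemma continuous_bool_clopen (T : topologicalType) (a : T -> bool) :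
  continuous a -> clopen [set x | a x].
Proof.
move=> ca; split; first exact: (bool_preimage_open [set true] ca).
rewrite -openC (_ : ~` _ = a @^-1` [set false]).
  exact: bool_preimage_open.
by apply/seteqP; split=> x /=; case: (a x).
Qed.

Lemma bool_eq_clopen (T : topologicalType) (a b : T -> bool) :
  continuous a -> continuous b -> clopen [set x | a x = b x].
Proof.
move=> ca cb; rewrite (_ : [set x | _] = [set x | a x == b x]).
  exact/continuous_bool_clopen/(continuous_bool_comb (fun u v : bool => u == v) ca cb).
by apply/seteqP; split=> x /= /eqP.
Qed.

Section CarrierOfE.
Variables (T : topologicalType) (le : T -> T -> Prop).

Lemma in_E_cst (v : bool) : in_E le (fun=> v).
Proof. by split=> [|x y _]; [exact: cst_continuous | exact: implybb]. Qed.

Lemma in_E_meet a b : in_E le a -> in_E le b -> in_E le (E_meet a b).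
Proof.
move=> [ca ma] [cb mb]; split; first exact: continuous_bool_comb.
move=> x y /[dup] /ma + /mb; rewrite /E_meet.
by case: (a x); case: (a y); case: (b x); case: (b y).
Qed.

Lemma in_E_join a b : in_E le a -> in_E le b -> in_E le (E_join a b).
Proof.
move=> [ca ma] [cb mb]; split; first exact: continuous_bool_comb.
move=> x y /[dup] /ma + /mb; rewrite /E_join.
by case: (a x); case: (a y); case: (b x); case: (b y).
Qed.

Lemma in_E_op (F : Type) (sign : F -> bool) (op : F -> T -> T) f a :
  cornish_space sign le op -> in_E le a -> in_E le (E_op sign op f a).
Proof.
move=> [_ /(_ f)[cf mf]] [ca ma].
have caf : continuous (a \o op f) by move=> x; exact: continuous_comp (cf x) (ca (op f x)).
rewrite /E_op; case: (sign f) mf => mf; split.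
- exact: caf.
- by move=> x y /mf /ma.
- exact: (continuous_bool_comb (fun u _ => ~~ u) caf caf).
- by move=> x y /mf /ma; case: (a (op f x)); case: (a (op f y)).
Qed.

Lemma in_E_separates_points u v : priestley_space le -> ~ le u v ->
  exists2 c, in_E le c & c u && ~~ c v.
Proof.
move=> [_ _ sep] /sep [U [cU uU Uu nUv]].
exists (fun x => `[< U x >]); last by rewrite asboolT // asboolF.
split=> [|x y lxy]; first exact: continuous_asbool.
by apply/implyP => /asboolP Ux; apply/asboolP; exact: uU Ux lxy.
Qed.

End CarrierOfE.

Section Separation.
Variables (T : topologicalType) (le : T -> T -> Prop).
Hypothesis priestley : priestley_space le.

Definition separates_from (x : T) (W : set T) :=
  exists a b, [/\ in_E le a, in_E le b, ~~ a x, b x & W `<=` [set y | a y = b y]].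

Lemma separates_from_point x y : x <> y -> separates_from x [set y].
Proof.
have [[_ antisym _] _ _] := priestley.
move=> nxy; have [lxy|nlxy] := pselect (le x y).
  have /(in_E_separates_points priestley) [c Ec /andP[cy ncx]] : ~ le y x.
    by move=> lyx; apply: nxy; exact: antisym.
  by exists c, (fun=> true); split=> //; [exact: in_E_cst | move=> _ ->].
have [c Ec /andP[cx ncy]] := in_E_separates_points priestley nlxy.
exists (fun=> false), c; split=> //; first exact: in_E_cst.
by move=> _ ->; apply/esym/negbTE.
Qed.

Lemma separates_fromU x U V :
  separates_from x U -> separates_from x V -> separates_from x (U `|` V).
Proof.
move=> [a1 [b1 [Ea1 Eb1 na1 b1x U1]]] [a2 [b2 [Ea2 Eb2 na2 b2x V2]]].
exists (E_join a1 a2), (E_join (E_meet b1 b2) (E_join a1 a2)).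
split; rewrite /E_join /E_meet ?(negbTE na1) ?(negbTE na2) ?b1x ?b2x //.
- exact: in_E_join.
- by apply: in_E_join; [exact: in_E_meet | exact: in_E_join].
by move=> y [/U1|/V2] /=; case: (a1 y); case: (b1 y); case: (a2 y); case: (b2 y).
Qed.

Lemma priestley_separation (Y : set T) x : closed Y -> ~ Y x ->
  exists a b, [/\ in_E le a, in_E le b, (forall y, Y y -> a y = b y) & a x <> b x].
Proof.
move=> cY nYx; have [_ cT _] := priestley.
have cpY : compact Y by exact: subclosed_compact cY cT _.
pose P W := open W /\ separates_from x W.
have [W [_ [a [b [Ea Eb nax bx Wab]]]] YW] : exists2 W, P W & Y `<=` W.
  apply: compact_setU_closed_cover => //.
  - split; first exact: open0.
    by exists (fun=> false), (fun=> true); split=> //; exact: in_E_cst.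
  - by move=> U V [oU sU] [oV sV]; split; [exact: openU | exact: separates_fromU].
  - by move=> U [].
  move=> y Yy; have /separates_from_point [a [b [Ea Eb nax bx yab]]] : x <> y.
    by move=> exy; apply: nYx; rewrite exy.
  exists [set z | a z = b z]; last exact: yab.
  split; first by have [] := bool_eq_clopen (proj1 Ea) (proj1 Eb).
  by exists a, b; split.
exists a, b; split=> // [y /YW /Wab //|].
by rewrite (negbTE nax) bx.
Qed.

End Separation.

Definition sub_of_con (T : Type) (th : (T -> bool) -> (T -> bool) -> Prop) : set T :=
  [set x | forall a b, th a b -> a x = b x].

Definition con_of_sub (T : topologicalType) (le : T -> T -> Prop) (Y : set T) :=
  fun a b => [/\ in_E le a, in_E le b & forall y, Y y -> a y = b y].

Section Congruence.
Variables (F : Type) (sign : F -> bool) (T : topologicalType).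
Variables (le : T -> T -> Prop) (op : F -> T -> T).
Variable th : (T -> bool) -> (T -> bool) -> Prop.
Hypothesis th_con : is_congruence sign le op th.

Lemma con_in_E a b : th a b -> in_E le a /\ in_E le b.
Proof. by case: th_con => + _ _ _ _; apply. Qed.

Lemma con_refl a : in_E le a -> th a a.
Proof. by case: th_con => _ + _ _ _; apply. Qed.

Lemma con_sym a b : th a b -> th b a.
Proof. by case: th_con => _ _ + _ _; apply. Qed.

Lemma con_trans a b c : th a b -> th b c -> th a c.
Proof. by case: th_con => _ _ _ + _; apply. Qed.

Lemma con_meet a b c d : th a b -> th c d -> th (E_meet a c) (E_meet b d).
Proof. by case: th_con => _ _ _ _ [+ _ _]; apply. Qed.

Lemma con_join a b c d : th a b -> th c d -> th (E_join a c) (E_join b d).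
Proof. by case: th_con => _ _ _ _ [_ + _]; apply. Qed.

Lemma con_op f a b : th a b -> th (E_op sign op f a) (E_op sign op f b).
Proof. by case: th_con => _ _ _ _ [_ _ +]; apply. Qed.

Lemma con_meet_join a b : in_E le a -> in_E le b ->
  th a b <-> th (E_meet a b) (E_join a b).
Proof.
move=> Ea Eb; split=> [tab|tmj].
  have meet_bb : E_meet b b = b by apply: funext => x; rewrite /E_meet andbb.
  have join_bb : E_join b b = b by apply: funext => x; rewrite /E_join orbb.
  have := con_meet tab (con_refl Eb); have := con_join tab (con_refl Eb).
  rewrite meet_bb join_bb => tj tm; exact: con_trans tm (con_sym tj).
have absorb c : in_E le c -> (c = a \/ c = b) -> th (E_meet a b) c.
  move=> Ec Hc; have := con_meet (con_refl Ec) tmj.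
  have -> : E_meet c (E_meet a b) = E_meet a b.
    by apply: funext => x; rewrite /E_meet; case: Hc => ->; case: (a x); case: (b x).
  suff -> : E_meet c (E_join a b) = c by [].
  by apply: funext => x; rewrite /E_meet /E_join; case: Hc => ->; case: (a x); case: (b x).
exact: con_trans (con_sym (absorb a Ea (or_introl erefl))) (absorb b Eb (or_intror erefl)).
Qed.

Definition collapses (V : set T) := forall a b, in_E le a -> in_E le b ->
  (forall x, a x -> b x) -> [set x | b x && ~~ a x] `<=` V -> th a b.

Lemma collapses0 : collapses set0.
Proof.
move=> a b Ea _ ab abV; suff -> : b = a by exact: con_refl.
apply: funext => x; apply/idP/idP => [bx|/ab //].
by apply: contraT => nax; have [] := abV x; rewrite /= bx.
Qed.

Lemma collapsesU_con c d V : th c d -> (forall x, c x -> d x) -> collapses V ->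
  collapses (V `|` [set x | d x && ~~ c x]).
Proof.
move=> tcd cd colV a b Ea Eb ab abVcd.
have [Ec Ed] := con_in_E tcd.
pose m e := E_join a (E_meet b e).
have Em e : in_E le e -> in_E le (m e).
  by move=> Ee; apply: in_E_join; last exact: in_E_meet.
have t1 : th a (m c).
  apply: (colV _ _ Ea (Em _ Ec)) => x; rewrite /m /E_join /E_meet; first by move->.
  case/andP=> /orP[-> //|/andP[bx cx]] nax.
  by have /abVcd [//|/andP[_ /negP]] : b x && ~~ a x by rewrite bx.
have t2 : th (m c) (m d).
  by apply: con_join; [exact: con_refl | apply: con_meet => //; exact: con_refl].
have t3 : th (m d) b.
  apply: (colV _ _ (Em _ Ed) Eb) => x; rewrite /m /E_join /E_meet.
    by case/orP=> [/ab|/andP[]].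
  move=> /andP[bx]; rewrite negb_or bx /= => /andP[nax ndx].
  have /abVcd [//|/andP[dx _]] : b x && ~~ a x by rewrite bx.
  by rewrite dx in ndx.
exact: con_trans (con_trans t1 t2) t3.
Qed.

Lemma con_of_agreement a b : compact [set: T] -> in_E le a -> in_E le b ->
  (forall y, sub_of_con th y -> a y = b y) -> th a b.
Proof.
move=> cT Ea Eb ab; apply/con_meet_join => //.
set lo := E_meet a b; set hi := E_join a b.
have [Elo Ehi] : in_E le lo /\ in_E le hi by split; [exact: in_E_meet | exact: in_E_join].
(* Unlike [collapses] itself, this property is closed under finite unions. *)
pose P W := open W /\ forall V, collapses V -> collapses (V `|` W).
have [W [_ PW] KW] : exists2 W, P W & [set x | hi x && ~~ lo x] `<=` W.
  apply: compact_setU_closed_cover.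
  - apply: subclosed_compact cT _ => //.
    exact: (continuous_bool_clopen (continuous_bool_comb (fun u v => u && ~~ v)
      (proj1 Ehi) (proj1 Elo))).2.
  - by split=> [|V]; [exact: open0 | rewrite setU0].
  - by move=> U V [oU PU] [oV PV]; split=> [|Z /PU /PV]; [exact: openU | rewrite setUA].
  - by move=> U [].
  move=> x Kx; have nYx : ~ sub_of_con th x.
    by move=> /ab abx; move: Kx; rewrite /= /hi /lo /E_join /E_meet abx; case: (b x).
  have [c [d [tcd ncd]]] : exists c d, th c d /\ c x <> d x.
    apply: contrapT => H; apply: nYx => c d tcd.
    by apply: contrapT => ncd; apply: H; exists c, d.
  have [Ec Ed] := con_in_E tcd.
  exists [set y | E_join c d y && ~~ E_meet c d y].
    split.
      exact: (continuous_bool_clopen (continuous_bool_comb (fun u v => u && ~~ v)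
        (proj1 (in_E_join Ec Ed)) (proj1 (in_E_meet Ec Ed)))).1.
    move=> V colV; apply: collapsesU_con colV; first exact: (con_meet_join Ec Ed).1.
    by move=> y /andP[+ _]; rewrite /E_join => ->.
  by move: ncd; rewrite /= /E_join /E_meet; case: (c x); case: (d x).
rewrite -[W]set0U in KW; apply: PW collapses0 _ _ Elo Ehi _ KW.
by move=> x /andP[+ _]; rewrite /hi /E_join => ->.
Qed.

Lemma closed_substructure_sub_of_con : closed_substructure op (sub_of_con th).
Proof.
split=> [|f y Yy a b tab].
  rewrite (_ : sub_of_con th = \bigcap_(p in [set p | th p.1 p.2]) [set x | p.1 x = p.2 x]).
    apply: closed_bigI => -[a b] /con_in_E [[ca _] [cb _]].
    exact: (bool_eq_clopen ca cb).2.
  by apply/seteqP; split=> x Yx => [[a b] /Yx | a b tab]; last exact: (Yx (a, b)).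
by have := Yy _ _ (con_op f tab); rewrite /E_op; case: (sign f) => // /negb_inj.
Qed.

Lemma sub_of_conK : compact [set: T] -> con_of_sub le (sub_of_con th) = th.
Proof.
move=> cT; apply: funext => a; apply: funext => b; apply: propext; split.
  by case=> Ea Eb; exact: con_of_agreement.
by move=> tab; have [Ea Eb] := con_in_E tab; split=> // y; exact.
Qed.

End Congruence.

Section Correspondence.
Variables (F : Type) (sign : F -> bool) (T : topologicalType).
Variables (le : T -> T -> Prop) (op : F -> T -> T).

Lemma is_congruence_con_of_sub Y : cornish_space sign le op ->
  closed_substructure op Y -> is_congruence sign le op (con_of_sub le Y).
Proof.
move=> cs [_ Yop]; split.
- by move=> a b [].
- by move=> a Ea; split.
- by move=> a b [Ea Eb ab]; split=> // y /ab.
- by move=> a b c [Ea Eb ab] [_ Ec bc]; split=> // y Yy; rewrite ab ?bc.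
split.
- move=> a b c d [Ea Eb ab] [Ec Ed cd]; split; try exact: in_E_meet.
  by move=> y Yy; rewrite /E_meet ab ?cd.
- move=> a b c d [Ea Eb ab] [Ec Ed cd]; split; try exact: in_E_join.
  by move=> y Yy; rewrite /E_join ab ?cd.
- move=> f a b [Ea Eb ab]; split; try exact: in_E_op.
  by move=> y Yy; rewrite /E_op; case: (sign f); rewrite /= ab //; exact: Yop.
Qed.

Lemma con_of_subK Y : priestley_space le -> closed Y ->
  sub_of_con (con_of_sub le Y) = Y.
Proof.
move=> ps cY; apply/seteqP; split=> x; last by move=> Yx a b [_ _]; apply.
move=> Yx; apply: contrapT => nYx.
have [a [b [Ea Eb ab nab]]] := priestley_separation ps cY nYx.
by apply: nab; apply: Yx.
Qed.

Lemma con_of_subT : con_of_sub le setT = (fun a b => in_E le a /\ a = b).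
Proof.
apply: funext => a; apply: funext => b; apply: propext; split.
  by case=> Ea _ ab; split=> //; apply: funext => x; exact: ab.
by case=> Ea <-.
Qed.

Lemma con_of_sub0 : con_of_sub le set0 = (fun a b => in_E le a /\ in_E le b).
Proof. by apply: funext => a; apply: funext => b; apply: propext; split; case. Qed.

Lemma in_E_nontrivial :
  (exists a b, [/\ in_E le a, in_E le b & a <> b]) <-> [set: T] !=set0.
Proof.
split=> [[a [b [_ _ nab]]]|[x _]].
  by apply: contrapT => /set0P/negP/negPn/eqP T0; apply: nab; apply: funext => x;
    have : [set: T] x by []; rewrite T0.
exists (fun=> false), (fun=> true); split; try exact: in_E_cst.
by move=> /(congr1 (@^~ x)).
Qed.

Lemma con_of_sub_inj Y Z : priestley_space le -> closed Y -> closed Z ->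
  con_of_sub le Y = con_of_sub le Z -> Y = Z.
Proof.
by move=> ps cY cZ eYZ; rewrite -(con_of_subK ps cY) -(con_of_subK ps cZ) eYZ.
Qed.

Lemma rel_sub_sub_of_con th ps : compact [set: T] ->
  is_congruence sign le op th -> is_congruence sign le op ps ->
  rel_sub th ps <-> sub_of_con ps `<=` sub_of_con th.
Proof.
move=> cT cth cps; split=> [thps x Yx a b /thps|incl a b tab]; first exact: Yx.
have [Ea Eb] := con_in_E cth tab; rewrite -(sub_of_conK cps cT).
by split=> // y /incl; apply.
Qed.

End Correspondence.

Theorem lemma5p5 (F : Type) (sign : F -> bool) (T : topologicalType)
    (le : T -> T -> Prop) (op : F -> T -> T) :
  cornish_space sign le op ->
  (exists Phi : Con_E sign le op -> Sub_X op,
     bijective Phi /\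
     forall th ps : Con_E sign le op,
       rel_sub (sval th) (sval ps) <-> (sval (Phi ps) `<=` sval (Phi th)))
  /\
  (E_simple sign le op <->
     ([set: T] !=set0 /\
      forall Y : set T, closed_substructure op Y -> Y = set0 \/ Y = setT)).
Proof.
move=> cs; have ps := proj1 cs; have [_ cT _] := ps.
pose Phi (th : Con_E sign le op) : Sub_X op :=
  exist _ (sub_of_con (sval th)) (closed_substructure_sub_of_con (svalP th)).
pose Psi (Y : Sub_X op) : Con_E sign le op :=
  exist _ (con_of_sub le (sval Y)) (is_congruence_con_of_sub cs (svalP Y)).
split.
  exists Phi; split=> [|[th cth] [ps' cps]]; last exact: rel_sub_sub_of_con cT cth cps.
  apply: (@Bijective _ _ _ Psi) => [[th cth]|[Y sY]]; apply: boolp.eq_exist.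
    exact: sub_of_conK cth cT.
  exact: con_of_subK (proj1 sY).
rewrite -(in_E_nontrivial le); split=> -[ntr simple]; split=> //.
  move=> Y cYs; have [cY _] := cYs.
  case: (simple _ (is_congruence_con_of_sub cs cYs)) => E; [right|left];
    apply: con_of_sub_inj ps cY _ _; rewrite ?E ?con_of_subT ?con_of_sub0 //.
  exact: closed0.
move=> th cth; rewrite -con_of_subT -con_of_sub0 -(sub_of_conK cth cT).
by case: (simple _ (closed_substructure_sub_of_con cth)) => ->; [right | left].
Qed.
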